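(* Let $m>1$, $N\ge2$, $\chi>0$, and let $k\ge2$ be an integer with $\chi<C_k$. Let $T\in(0,\infty)$ and let $X\in C^0([0,T),\mathcal R^N)$ be a solution of the gradient flow system on $[0,T)$. Then any weak blow-up set of $X$ at time $T$ containing at least two indices contains at least $k+1$ indices.
   Context: $\mathcal R^N=\{X\in\mathbb R^N: X_1<\dots<X_N,\ \sum_iX_i=0\}$. For $p\ge2$, $C_p$ is defined by $\frac1{C_p}=\max_{X\in\mathcal R^p}\frac{\sum_{1\le i\ne j\le p}|X_j-X_i|^{1-m}}{\sum_{i=1}^{p-1}(X_{i+1}-X_i)^{1-m}}$. Gradient flow system: for $i=1,\dots,N$, $\dot X_i=-(X_{i+1}-X_i)^{-m}+(X_i-X_{i-1})^{-m}+2\chi\sum_{j\ne i}\mathrm{sign}(j-i)|X_j-X_i|^{-m}$, the first term absent for $i=N$ and the second for $i=1$. A set $\mathcal I=[l,r]$ of consecutive integers in $[1,N]$ weakly blows up at time $T$ if $\liminf_{t\to T^-}(X_{i+1}(t)-X_i(t))=0$ for every $i\in[l,r-1]$; a weak blow-up set is such a set that is maximal for inclusion. *)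

From Stdlib Require Import Reals Lra Lia.
From Coquelicot Require Import Coquelicot.
Open Scope R_scope.

(* Vectors of R^p are represented as functions nat -> R, indexed 1..p (as in the paper). *)

Fixpoint sum1 (n : nat) (f : nat -> R) : R :=
  match n with
  | O => 0
  | S n' => sum1 n' f + f (S n')
  end.

Definition in_Rcal (p : nat) (X : nat -> R) : Prop :=
  (forall i : nat, (1 <= i)%nat -> (i < p)%nat -> X i < X (S i)) /\
  sum1 p X = 0.

Definition C_num (m : R) (p : nat) (X : nat -> R) : R :=
  sum1 p (fun i => sum1 p (fun j =>
    if Nat.eq_dec i j then 0 else Rpower (Rabs (X j - X i)) (1 - m))).

Definition C_den (m : R) (p : nat) (X : nat -> R) : R :=
  sum1 (p - 1) (fun i => Rpower (X (S i) - X i) (1 - m)).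

(* 1 / C_p = max over R^p of C_num / C_den (taken as a supremum) *)
Definition C_inv (m : R) (p : nat) : Rbar :=
  Lub_Rbar (fun r => exists X, in_Rcal p X /\ r = C_num m p X / C_den m p X).

Definition C_const (m : R) (p : nat) : R := / real (C_inv m p).

Definition flow_rhs (m chi : R) (N : nat) (Y : nat -> R) (i : nat) : R :=
  (if Nat.eq_dec i N then 0 else - Rpower (Y (S i) - Y i) (- m))
  + (if Nat.eq_dec i 1 then 0 else Rpower (Y i - Y (pred i)) (- m))
  + 2 * chi * sum1 N (fun j =>
      if Nat.ltb i j then Rpower (Rabs (Y j - Y i)) (- m)
      else if Nat.ltb j i then - Rpower (Rabs (Y j - Y i)) (- m)
      else 0).

Definition is_solution (m chi : R) (N : nat) (T : R) (X : R -> nat -> R) : Prop :=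
  (forall t, 0 <= t < T -> in_Rcal N (X t)) /\
  (forall i, (1 <= i <= N)%nat ->
     continuous_on (fun t => 0 <= t < T) (fun t => X t i)) /\
  (forall i t, (1 <= i <= N)%nat -> 0 < t < T ->
     is_derive (fun s => X s i) t (flow_rhs m chi N (X t) i)).

Definition liminf_left_eq0 (g : R -> R) (T : R) : Prop :=
  (* liminf <= 0 *)
  (forall eps delta, 0 < eps -> 0 < delta ->
     exists t, 0 <= t < T /\ T - delta < t /\ g t < eps) /\
  (* liminf >= 0 *)
  (forall eps, 0 < eps -> exists delta, 0 < delta /\
     forall t, 0 <= t < T -> T - delta < t -> - eps < g t).

Definition weakly_blows_up (N : nat) (X : R -> nat -> R) (T : R) (l r : nat) : Prop :=
  (1 <= l)%nat /\ (l <= r)%nat /\ (r <= N)%nat /\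
  forall i, (l <= i)%nat -> (i < r)%nat ->
    liminf_left_eq0 (fun t => X t (S i) - X t i) T.

Definition weak_blowup_set (N : nat) (X : R -> nat -> R) (T : R) (l r : nat) : Prop :=
  weakly_blows_up N X T l r /\
  forall l' r', weakly_blows_up N X T l' r' -> (l' <= l)%nat -> (r <= r')%nat ->
    l' = l /\ r' = r.

(* Suppose the weak blow-up set [l, r] has only p = r - l + 1 <= k points, and let Y be the
   cluster (X_l, ..., X_r). By maximality the two gaps bordering it stay above some eta > 0 near T.
   Consider the energy E = D - chi S of Y, with D the sum of its gaps and S the sum of all its
   mutual distances, both to the power 1 - m < 0. Padding Y with far away points shows
   S <= D / C_k, so E >= (1 - chi / C_k) (X_{l+1} - X_l)^(1 - m), which is unbounded along the
   times where that gap tends to 0. On the other hand dE/dt = (1 - m) <F, V>, where F is the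
   gradient flow of the isolated cluster and V the true velocity; the two differ by at most a
   constant B depending on eta, and a b >= -(b - a)^2 / 4 gives dE/dt <= (m - 1) p B^2 / 4, so E
   stays bounded. *)

From Stdlib Require Import Reals Lra Lia Psatz Classical.
From Coquelicot Require Import Coquelicot.
Open Scope R_scope.

Lemma sum1_ext n f g : (forall i, (1 <= i <= n)%nat -> f i = g i) -> sum1 n f = sum1 n g.
Proof.
  induction n as [|n IH]; intros Hfg; simpl; [reflexivity|].
  rewrite IH, Hfg; [reflexivity | lia | intros; apply Hfg; lia].
Qed.

Lemma sum1_plus n f g : sum1 n (fun i => f i + g i) = sum1 n f + sum1 n g.
Proof. induction n as [|n IH]; simpl; [ring|]. rewrite IH; ring. Qed.

Lemma sum1_minus n f g : sum1 n (fun i => f i - g i) = sum1 n f - sum1 n g.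
Proof. induction n as [|n IH]; simpl; [ring|]. rewrite IH; ring. Qed.

Lemma sum1_opp n f : sum1 n (fun i => - f i) = - sum1 n f.
Proof. induction n as [|n IH]; simpl; [ring|]. rewrite IH; ring. Qed.

Lemma sum1_scal n c f : sum1 n (fun i => c * f i) = c * sum1 n f.
Proof. induction n as [|n IH]; simpl; [ring|]. rewrite IH; ring. Qed.

Lemma sum1_const n c : sum1 n (fun _ => c) = INR n * c.
Proof. induction n as [|n IH]; simpl sum1; [simpl; ring|]. rewrite IH, S_INR; ring. Qed.

Lemma sum1_last n f : sum1 (S n) f = sum1 n f + f (S n).
Proof. reflexivity. Qed.

Lemma sum1_first n f : sum1 (S n) f = f 1%nat + sum1 n (fun i => f (S i)).
Proof. induction n as [|n IH]; simpl sum1; [ring|]. simpl sum1 in IH. rewrite IH; ring. Qed.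

Lemma sum1_split a b f : sum1 (a + b) f = sum1 a f + sum1 b (fun i => f (a + i)%nat).
Proof.
  induction b as [|b IH]; simpl sum1; [rewrite Nat.add_0_r; ring|].
  rewrite Nat.add_succ_r; simpl sum1. rewrite IH; ring.
Qed.

Lemma sum1_swap n p f :
  sum1 n (fun i => sum1 p (fun j => f i j)) = sum1 p (fun j => sum1 n (fun i => f i j)).
Proof.
  induction n as [|n IH]; simpl sum1; [rewrite sum1_const; ring|].
  rewrite IH, <- sum1_plus. reflexivity.
Qed.

Lemma sum1_le n f g : (forall i, (1 <= i <= n)%nat -> f i <= g i) -> sum1 n f <= sum1 n g.
Proof.
  induction n as [|n IH]; intros Hfg; simpl; [lra|].
  assert (sum1 n f <= sum1 n g) by (apply IH; intros; apply Hfg; lia).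
  assert (f (S n) <= g (S n)) by (apply Hfg; lia). lra.
Qed.

Lemma sum1_nonneg n f : (forall i, (1 <= i <= n)%nat -> 0 <= f i) -> 0 <= sum1 n f.
Proof. intros Hf. rewrite <- (Rmult_0_r (INR n)), <- sum1_const. apply sum1_le; auto. Qed.

Lemma sum1_le_add n d f :
  (forall i, (1 <= i <= n + d)%nat -> 0 <= f i) -> sum1 n f <= sum1 (n + d) f.
Proof.
  intros Hf. rewrite sum1_split.
  assert (0 <= sum1 d (fun i => f (n + i)%nat)) by (apply sum1_nonneg; intros; apply Hf; lia).
  lra.
Qed.

Lemma Rabs_sum1_le n f M :
  (forall i, (1 <= i <= n)%nat -> Rabs (f i) <= M) -> Rabs (sum1 n f) <= INR n * M.
Proof.
  induction n as [|n IH]; intros Hf; simpl sum1; [rewrite Rabs_R0; simpl; lra|].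
  rewrite S_INR. eapply Rle_trans; [apply Rabs_triang|].
  assert (Rabs (sum1 n f) <= INR n * M) by (apply IH; intros; apply Hf; lia).
  assert (Rabs (f (S n)) <= M) by (apply Hf; lia). lra.
Qed.

Lemma is_derive_sum1 n (f : R -> nat -> R) t df :
  (forall i, (1 <= i <= n)%nat -> is_derive (fun s => f s i) t (df i)) ->
  is_derive (fun s => sum1 n (f s)) t (sum1 n df).
Proof.
  induction n as [|n IH]; intros Hf; simpl.
  - apply (is_derive_const (V:=R_NormedModule)).
  - apply (is_derive_plus (V:=R_NormedModule) (fun s => sum1 n (f s)) (fun s => f s (S n))).
    + apply IH; intros; apply Hf; lia.
    + apply Hf; lia.
Qed.

Lemma sum1_antisym_mul_diff n (a : nat -> nat -> R) V :
  (forall i j, a j i = - a i j) ->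
  sum1 n (fun i => sum1 n (fun j => a i j * (V j - V i))) =
  -2 * sum1 n (fun i => V i * sum1 n (a i)).
Proof.
  intros Ha.
  assert (Hswap : sum1 n (fun i => sum1 n (fun j => a i j * V j)) =
                  - sum1 n (fun i => V i * sum1 n (a i))).
  { rewrite sum1_swap, <- sum1_opp. apply sum1_ext; intros j _.
    rewrite <- sum1_scal, <- sum1_opp. apply sum1_ext; intros i _. rewrite (Ha j i); ring. }
  rewrite (sum1_ext n _ (fun i => sum1 n (fun j => a i j * V j) - V i * sum1 n (a i))).
  - rewrite sum1_minus, Hswap; ring.
  - intros i _. rewrite <- sum1_scal, <- sum1_minus. apply sum1_ext; intros; ring.
Qed.

Lemma sum1_by_parts q (w V : nat -> R) :
  sum1 q (fun i => w i * (V (S i) - V i)) =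
  sum1 (S q) (fun i => ((if Nat.eq_dec i (S q) then 0 else - w i)
                        + (if Nat.eq_dec i 1 then 0 else w (pred i))) * V i).
Proof.
  assert (Hright : sum1 (S q) (fun i => (if Nat.eq_dec i (S q) then 0 else - w i) * V i) =
                   - sum1 q (fun i => w i * V i)).
  { rewrite sum1_last. destruct (Nat.eq_dec (S q) (S q)); [|lia].
    rewrite <- sum1_opp. rewrite Rmult_0_l, Rplus_0_r.
    apply sum1_ext; intros i Hi. destruct Nat.eq_dec; [lia|ring]. }
  assert (Hleft : sum1 (S q) (fun i => (if Nat.eq_dec i 1 then 0 else w (pred i)) * V i) =
                  sum1 q (fun i => w i * V (S i))).
  { rewrite sum1_first. destruct (Nat.eq_dec 1 1); [|lia]. rewrite Rmult_0_l, Rplus_0_l.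
    apply sum1_ext; intros i Hi. destruct Nat.eq_dec; [lia|reflexivity]. }
  rewrite (sum1_ext (S q) _ (fun i => (if Nat.eq_dec i (S q) then 0 else - w i) * V i
      + (if Nat.eq_dec i 1 then 0 else w (pred i)) * V i)) by (intros; ring).
  rewrite sum1_plus, Hright, Hleft, (sum1_ext q _ (fun i => w i * V (S i) - w i * V i))
    by (intros; ring).
  rewrite sum1_minus; ring.
Qed.

Lemma Rpower_pos x y : 0 < Rpower x y.
Proof. apply exp_pos. Qed.

Lemma Rpower_lt_neg_exponent a b y : y < 0 -> 0 < a < b -> Rpower b y < Rpower a y.
Proof.
  intros Hy [Ha Hab]. assert (ln a < ln b) by (apply ln_increasing; lra).
  apply exp_increasing; nra.
Qed.

Lemma Rpower_le_neg_exponent a b y : y < 0 -> 0 < a <= b -> Rpower b y <= Rpower a y.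
Proof.
  intros Hy [Ha [Hab | ->]]; [|lra]. left; apply Rpower_lt_neg_exponent; lra.
Qed.

Lemma Rpower_inv_exponent a e : e <> 0 -> 0 < a -> Rpower (Rpower a (/ e)) e = a.
Proof. intros He Ha. rewrite Rpower_mult, Rinv_l, Rpower_1; auto. Qed.

Lemma Rpower_neg_exponent_large e M : e < 0 ->
  exists eps, 0 < eps /\ forall x, 0 < x < eps -> M < Rpower x e.
Proof.
  intros He. set (A := Rabs M + 1).
  assert (HA : 0 < A) by (unfold A; pose proof (Rabs_pos M); lra).
  exists (Rpower A (/ e)). split; [apply Rpower_pos|]. intros x Hx.
  apply Rlt_trans with A; [unfold A; pose proof (Rle_abs M); lra|].
  rewrite <- (Rpower_inv_exponent A e) at 1 by lra.
  apply Rpower_lt_neg_exponent; auto.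
Qed.

Definition increasing (n : nat) (Z : nat -> R) : Prop :=
  forall i, (1 <= i)%nat -> (i < n)%nat -> Z i < Z (S i).

Lemma increasing_le n Z a b :
  increasing n Z -> (1 <= a)%nat -> (a <= b)%nat -> (b <= n)%nat -> Z a <= Z b.
Proof.
  intros HZ Ha Hab Hb. induction Hab as [|b Hab IH]; [lra|].
  assert (Z b < Z (S b)) by (apply HZ; lia). specialize (IH ltac:(lia)). lra.
Qed.

Lemma increasing_lt n Z a b :
  increasing n Z -> (1 <= a)%nat -> (a < b)%nat -> (b <= n)%nat -> Z a < Z b.
Proof.
  intros HZ Ha Hab Hb. assert (Z a < Z (S a)) by (apply HZ; lia).
  assert (Z (S a) <= Z b) by (apply (increasing_le n); auto; lia). lra.
Qed.

Lemma C_num_translate m n Z a : C_num m n (fun i => Z i + a) = C_num m n Z.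
Proof.
  unfold C_num. apply sum1_ext; intros i _; apply sum1_ext; intros j _.
  replace (Z j + a - (Z i + a)) with (Z j - Z i) by ring. reflexivity.
Qed.

Lemma C_den_translate m n Z a : C_den m n (fun i => Z i + a) = C_den m n Z.
Proof.
  unfold C_den. apply sum1_ext; intros i _.
  replace (Z (S i) + a - (Z i + a)) with (Z (S i) - Z i) by ring. reflexivity.
Qed.

Lemma C_den_pos m n Z : (2 <= n)%nat -> 0 < C_den m n Z.
Proof.
  intros Hn. unfold C_den. replace (n - 1)%nat with (S (n - 2)) by lia. rewrite sum1_first.
  pose proof (Rpower_pos (Z 2%nat - Z 1%nat) (1 - m)).
  assert (0 <= sum1 (n - 2) (fun i => Rpower (Z (S (S i)) - Z (S i)) (1 - m)))
    by (apply sum1_nonneg; intros; left; apply Rpower_pos).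
  lra.
Qed.

(* Translating an increasing vector to mean zero puts it in R^k, where the supremum C_inv applies. *)
Lemma C_num_le_C_inv m k c Z : C_inv m k = Finite c -> (2 <= k)%nat -> increasing k Z ->
  C_num m k Z <= c * C_den m k Z.
Proof.
  intros Hc Hk HZ.
  set (Z0 := fun i => Z i + - (sum1 k Z / INR k)).
  assert (HZ0 : in_Rcal k Z0).
  { split.
    - intros i Hi1 Hi2; unfold Z0. specialize (HZ i Hi1 Hi2). lra.
    - unfold Z0. rewrite sum1_plus, sum1_const.
      assert (0 < INR k) by (apply lt_0_INR; lia). field. lra. }
  pose proof (proj1 (Lub_Rbar_correct
    (fun r => exists X, in_Rcal k X /\ r = C_num m k X / C_den m k X))) as Hub.
  fold (C_inv m k) in Hub. rewrite Hc in Hub.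
  specialize (Hub _ (ex_intro _ Z0 (conj HZ0 eq_refl))). simpl in Hub.
  unfold Z0 in Hub. rewrite C_num_translate, C_den_translate in Hub.
  assert (0 < C_den m k Z) by (apply C_den_pos; auto).
  apply (Rmult_le_compat_r (C_den m k Z)) in Hub; [|lra].
  unfold Rdiv in Hub. rewrite Rmult_assoc, Rinv_l in Hub; lra.
Qed.

Definition pad_far (p : nat) (L : R) (Y : nat -> R) (i : nat) : R :=
  if Nat.leb i p then Y i else Y p + INR (i - p) * L.

Lemma pad_far_step p L Y j : (p <= j)%nat -> pad_far p L Y (S j) - pad_far p L Y j = L.
Proof.
  intros Hj. unfold pad_far.
  destruct (Nat.leb_spec (S j) p); [lia|]. replace (S j - p)%nat with (S (j - p)) by lia.
  rewrite S_INR. destruct (Nat.leb_spec j p).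
  - replace (j - p)%nat with 0%nat by lia. replace j with p by lia. simpl; ring.
  - ring.
Qed.

Lemma pad_far_increasing n p L Y : 0 < L -> increasing p Y -> increasing n (pad_far p L Y).
Proof.
  intros HL HY i Hi1 Hi2. destruct (Nat.le_gt_cases p i).
  - pose proof (pad_far_step p L Y i H). lra.
  - unfold pad_far. destruct (Nat.leb_spec i p); [|lia].
    destruct (Nat.leb_spec (S i) p); [|lia]. apply HY; lia.
Qed.

Lemma C_num_pad_far m p n L Y : (p <= n)%nat -> C_num m p Y <= C_num m n (pad_far p L Y).
Proof.
  intros Hpn. unfold C_num. replace n with (p + (n - p))%nat by lia.
  set (term := fun (Z : nat -> R) i j =>
                 if Nat.eq_dec i j then 0 else Rpower (Rabs (Z j - Z i)) (1 - m)).
  assert (Hterm : forall Z i j, 0 <= term Z i j)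
    by (intros; unfold term; destruct Nat.eq_dec; [lra | left; apply Rpower_pos]).
  apply Rle_trans with (sum1 p (fun i => sum1 (p + (n - p)) (term (pad_far p L Y) i))).
  - apply sum1_le; intros i Hi.
    apply Rle_trans with (sum1 p (term (pad_far p L Y) i)); [|apply sum1_le_add; intros j _; apply Hterm].
    right; apply sum1_ext; intros j Hj. unfold term, pad_far.
    destruct (Nat.leb_spec i p); [|lia]. destruct (Nat.leb_spec j p); [|lia]. reflexivity.
  - apply sum1_le_add; intros i _; apply sum1_nonneg; intros j _; apply Hterm.
Qed.

Lemma C_den_pad_far m p n L Y : (1 <= p <= n)%nat ->
  C_den m n (pad_far p L Y) = C_den m p Y + INR (n - p) * Rpower L (1 - m).
Proof.
  intros Hp. unfold C_den. replace (n - 1)%nat with (p - 1 + (n - p))%nat by lia.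
  rewrite sum1_split, <- sum1_const. f_equal.
  - apply sum1_ext; intros i Hi. unfold pad_far.
    destruct (Nat.leb_spec i p); [|lia]. destruct (Nat.leb_spec (S i) p); [|lia]. reflexivity.
  - apply sum1_ext; intros i Hi. rewrite pad_far_step by lia. reflexivity.
Qed.

(* Points placed at distance L beyond the cluster contribute L^(1-m) -> 0 to C_den: 1/C_p <= 1/C_k. *)
Lemma C_num_le_C_inv_of_le m k p c Y : 1 < m -> C_inv m k = Finite c -> 0 < c ->
  (2 <= p)%nat -> (p <= k)%nat -> increasing p Y -> C_num m p Y <= c * C_den m p Y.
Proof.
  intros Hm Hc Hc0 Hp Hpk HY. apply Rle_plus_epsilon; intros eps Heps.
  set (d := INR (k - p)). assert (Hd : 0 <= d) by apply pos_INR.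
  set (L := Rpower (eps / (c * (d + 1))) (/ (1 - m))).
  assert (HL : Rpower L (1 - m) = eps / (c * (d + 1)))
    by (apply Rpower_inv_exponent; [lra | apply Rdiv_lt_0_compat; nra]).
  pose proof (C_num_le_C_inv m k c (pad_far p L Y) Hc ltac:(lia)
                (pad_far_increasing k p L Y (Rpower_pos _ _) HY)) as Hpad.
  rewrite C_den_pad_far, HL in Hpad by lia. fold d in Hpad.
  pose proof (C_num_pad_far m p k L Y Hpk).
  assert (c * (d * (eps / (c * (d + 1)))) <= eps).
  { replace (c * (d * (eps / (c * (d + 1))))) with (eps * (d / (d + 1))) by (field; lra).
    assert (d / (d + 1) <= 1) by (apply (Rcomplements.Rdiv_le_1 d (d + 1)); lra). nra. }
  lra.
Qed.

Definition pair_power (m : R) (Z : nat -> R) (i j : nat) : R :=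
  if Nat.ltb i j then Rpower (Z j - Z i) (1 - m)
  else if Nat.ltb j i then Rpower (Z i - Z j) (1 - m) else 0.

Definition pair_force (m : R) (Z : nat -> R) (i j : nat) : R :=
  if Nat.ltb i j then Rpower (Rabs (Z j - Z i)) (- m)
  else if Nat.ltb j i then - Rpower (Rabs (Z j - Z i)) (- m) else 0.

Definition neighbour_force (m : R) (N : nat) (Z : nat -> R) (i : nat) : R :=
  (if Nat.eq_dec i N then 0 else - Rpower (Z (S i) - Z i) (- m))
  + (if Nat.eq_dec i 1 then 0 else Rpower (Z i - Z (pred i)) (- m)).

Lemma flow_rhs_split m chi N Z i :
  flow_rhs m chi N Z i = neighbour_force m N Z i + 2 * chi * sum1 N (pair_force m Z i).
Proof. reflexivity. Qed.

Lemma pair_force_antisym m Z i j : pair_force m Z j i = - pair_force m Z i j.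
Proof.
  unfold pair_force. rewrite (Rabs_minus_sym (Z i)).
  destruct (Nat.ltb_spec i j), (Nat.ltb_spec j i); try lia; ring.
Qed.

(* C_den - chi C_num (see cluster_energy_eq) written without absolute values, so that it can be
   differentiated along the flow. *)
Definition cluster_energy (m chi : R) (q : nat) (Z : nat -> R) : R :=
  sum1 q (fun i => Rpower (Z (S i) - Z i) (1 - m))
  - chi * sum1 (S q) (fun i => sum1 (S q) (pair_power m Z i)).

Lemma cluster_energy_eq m chi q Z : increasing (S q) Z ->
  cluster_energy m chi q Z = C_den m (S q) Z - chi * C_num m (S q) Z.
Proof.
  intros HZ. unfold cluster_energy, C_den, C_num. replace (S q - 1)%nat with q by lia.
  do 2 f_equal. apply sum1_ext; intros i Hi; apply sum1_ext; intros j Hj. unfold pair_power.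
  destruct (Nat.eq_dec i j) as [<-|Hij]; [rewrite Nat.ltb_irrefl; reflexivity|].
  destruct (Nat.ltb_spec i j).
  - assert (Z i < Z j) by (apply (increasing_lt (S q)); auto; lia).
    rewrite Rabs_right by lra. reflexivity.
  - destruct (Nat.ltb_spec j i); [|lia].
    assert (Z j < Z i) by (apply (increasing_lt (S q)); auto; lia).
    rewrite Rabs_left by lra. f_equal; ring.
Qed.

Lemma cluster_energy_derivative_eq m chi q Z V :
  sum1 q (fun i => (1 - m) * Rpower (Z (S i) - Z i) (- m) * (V (S i) - V i))
  - chi * sum1 (S q) (fun i => sum1 (S q) (fun j => (1 - m) * pair_force m Z i j * (V j - V i)))
  = (1 - m) * sum1 (S q) (fun i => flow_rhs m chi (S q) Z i * V i).
Proof.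
  assert (Hgap : sum1 q (fun i => (1 - m) * Rpower (Z (S i) - Z i) (- m) * (V (S i) - V i)) =
                 (1 - m) * sum1 (S q) (fun i => neighbour_force m (S q) Z i * V i)).
  { rewrite (sum1_ext q _ (fun i => (1 - m) * (Rpower (Z (S i) - Z i) (- m) * (V (S i) - V i))))
      by (intros; ring).
    rewrite sum1_scal, sum1_by_parts. f_equal. apply sum1_ext; intros i Hi.
    unfold neighbour_force. destruct (Nat.eq_dec i 1); [reflexivity|].
    replace (S (pred i)) with i by lia. reflexivity. }
  assert (Hpair : sum1 (S q) (fun i => sum1 (S q) (fun j => (1 - m) * pair_force m Z i j * (V j - V i)))
                  = -2 * (1 - m) * sum1 (S q) (fun i => V i * sum1 (S q) (pair_force m Z i))).
  { rewrite (sum1_ext (S q) _ (fun i => (1 - m) *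
               sum1 (S q) (fun j => pair_force m Z i j * (V j - V i)))).
    - rewrite sum1_scal, sum1_antisym_mul_diff by apply pair_force_antisym. ring.
    - intros i _. rewrite <- sum1_scal. apply sum1_ext; intros; ring. }
  rewrite Hgap, Hpair.
  rewrite (sum1_ext (S q) (fun i => flow_rhs m chi (S q) Z i * V i)
             (fun i => neighbour_force m (S q) Z i * V i
                       + 2 * chi * (V i * sum1 (S q) (pair_force m Z i))))
    by (intros; rewrite flow_rhs_split; ring).
  rewrite sum1_plus, sum1_scal. ring.
Qed.

Lemma is_derive_gap_power m (Y : R -> nat -> R) V t i j :
  is_derive (fun s => Y s i) t (V i) -> is_derive (fun s => Y s j) t (V j) -> Y t i < Y t j ->
  is_derive (fun s => Rpower (Y s j - Y s i) (1 - m)) t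
            ((1 - m) * Rpower (Y t j - Y t i) (- m) * (V j - V i)).
Proof.
  intros Hi Hj Hij.
  pose proof (is_derive_minus (V:=R_NormedModule) _ _ t _ _ Hj Hi) as Hdiff.
  pose proof (proj2 (is_derive_Reals _ _ _) (derivable_pt_lim_power (Y t j - Y t i) (1 - m)
                ltac:(lra))) as Hpow.
  pose proof (is_derive_comp _ _ t _ _ Hpow Hdiff) as H.
  replace (- m) with (1 - m - 1) by ring.
  replace ((1 - m) * Rpower (Y t j - Y t i) (1 - m - 1) * (V j - V i))
    with (scal (minus (V j) (V i)) ((1 - m) * Rpower (Y t j - Y t i) (1 - m - 1)))
    by (unfold scal, minus, plus, opp; simpl; unfold mult; simpl; ring).
  exact H.
Qed.

Lemma is_derive_pair_power m n (Y : R -> nat -> R) V t i j :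
  (forall k, (1 <= k <= n)%nat -> is_derive (fun s => Y s k) t (V k)) -> increasing n (Y t) ->
  (1 <= i <= n)%nat -> (1 <= j <= n)%nat ->
  is_derive (fun s => pair_power m (Y s) i j) t ((1 - m) * pair_force m (Y t) i j * (V j - V i)).
Proof.
  intros HV HY Hi Hj. unfold pair_power, pair_force.
  destruct (Nat.ltb_spec i j).
  - assert (Y t i < Y t j) by (apply (increasing_lt n); auto; lia).
    rewrite Rabs_right by lra. apply is_derive_gap_power; auto.
  - destruct (Nat.ltb_spec j i).
    + assert (Y t j < Y t i) by (apply (increasing_lt n); auto; lia).
      rewrite Rabs_left by lra.
      replace ((1 - m) * - Rpower (- (Y t j - Y t i)) (- m) * (V j - V i))
        with ((1 - m) * Rpower (Y t i - Y t j) (- m) * (V i - V j))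
        by (replace (- (Y t j - Y t i)) with (Y t i - Y t j) by ring; ring).
      apply is_derive_gap_power; auto.
    + rewrite Rmult_0_r, Rmult_0_l. apply (is_derive_const (V:=R_NormedModule)).
Qed.

Lemma is_derive_cluster_energy m chi q (Y : R -> nat -> R) V t :
  (forall i, (1 <= i <= S q)%nat -> is_derive (fun s => Y s i) t (V i)) ->
  increasing (S q) (Y t) ->
  is_derive (fun s => cluster_energy m chi q (Y s)) t
            ((1 - m) * sum1 (S q) (fun i => flow_rhs m chi (S q) (Y t) i * V i)).
Proof.
  intros HV HY. rewrite <- cluster_energy_derivative_eq. unfold cluster_energy.
  apply (is_derive_minus (V:=R_NormedModule)).
  - apply (is_derive_sum1 q (fun s i => Rpower (Y s (S i) - Y s i) (1 - m))); intros i Hi.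
    apply is_derive_gap_power; try (apply HV; lia). apply HY; lia.
  - apply is_derive_scal.
    apply (is_derive_sum1 (S q) (fun s i => sum1 (S q) (pair_power m (Y s) i))); intros i Hi.
    apply (is_derive_sum1 (S q) (fun s j => pair_power m (Y s) i j)); intros j Hj.
    apply (is_derive_pair_power m (S q)); auto.
Qed.

Lemma mul_ge_neg_sqr_diff a b B : Rabs (b - a) <= B -> - (B * B) / 4 <= a * b.
Proof.
  intros Hab. pose proof (Rabs_pos (b - a)).
  assert ((b - a) * (b - a) <= B * B) by (pose proof (Rsqr_abs (b - a)); unfold Rsqr in *; nra).
  pose proof (Rle_0_sqr (a + b)). unfold Rsqr in *. lra.
Qed.

Lemma cluster_energy_derive_le m chi q (Y : R -> nat -> R) V t B : 1 < m ->
  (forall i, (1 <= i <= S q)%nat -> is_derive (fun s => Y s i) t (V i)) ->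
  increasing (S q) (Y t) ->
  (forall i, (1 <= i <= S q)%nat -> Rabs (V i - flow_rhs m chi (S q) (Y t) i) <= B) ->
  exists dE, is_derive (fun s => cluster_energy m chi q (Y s)) t dE /\
             dE <= (m - 1) * INR (S q) * (B * B) / 4.
Proof.
  intros Hm HV HY HB. eexists; split; [apply is_derive_cluster_energy; auto|].
  assert (INR (S q) * (- (B * B) / 4) <=
          sum1 (S q) (fun i => flow_rhs m chi (S q) (Y t) i * V i)).
  { rewrite <- sum1_const. apply sum1_le; intros i Hi. apply mul_ge_neg_sqr_diff; auto. }
  pose proof (pos_INR (S q)). nra.
Qed.

Lemma increment_le_of_derive_le (f : R -> R) a b K : a <= b ->
  (forall t, a <= t <= b -> exists df, is_derive f t df /\ df <= K) ->
  f b - f a <= K * (b - a).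
Proof.
  intros Hab Hf. destruct (Req_dec a b) as [<-|Hne]; [lra|].
  destruct (MVT_gen f a b (Derive f)) as [x [Hx ->]];
    rewrite ?Rmin_left, ?Rmax_right in * by lra.
  - intros x Hx. destruct (Hf x ltac:(lra)) as [df [Hd _]].
    rewrite (is_derive_unique _ _ _ Hd). exact Hd.
  - intros x Hx. destruct (Hf x Hx) as [df [Hd _]]. apply continuity_pt_filterlim.
    apply (ex_derive_continuous (K:=R_AbsRing) (V:=R_NormedModule)). exists df; exact Hd.
  - destruct (Hf x Hx) as [df [Hd Hle]]. rewrite (is_derive_unique _ _ _ Hd).
    apply Rmult_le_compat_r; lra.
Qed.

Definition cluster (l : nat) (Z : nat -> R) (j : nat) : R := Z (l - 1 + j)%nat.

Definition isolated_cluster (eta : R) (N l r : nat) (Z : nat -> R) : Prop :=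
  ((1 < l)%nat -> eta <= Z l - Z (l - 1)%nat) /\ ((r < N)%nat -> eta <= Z (S r) - Z r).

Lemma cluster_increasing N l r Z : increasing N Z -> (1 <= l)%nat -> (r <= N)%nat ->
  increasing (S (r - l)) (cluster l Z).
Proof.
  intros HZ Hl Hr i Hi1 Hi2. unfold cluster.
  replace (l - 1 + S i)%nat with (S (l - 1 + i)) by lia. apply HZ; lia.
Qed.

Lemma cluster_first_gap l Z : (1 <= l)%nat -> cluster l Z 2%nat - cluster l Z 1%nat = Z (S l) - Z l.
Proof.
  intros Hl. unfold cluster.
  replace (l - 1 + 2)%nat with (S l) by lia. replace (l - 1 + 1)%nat with l by lia. reflexivity.
Qed.

Lemma pair_force_cluster m l Z i j :
  pair_force m Z (l - 1 + i) (l - 1 + j) = pair_force m (cluster l Z) i j.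
Proof.
  unfold pair_force, cluster.
  destruct (Nat.ltb_spec (l - 1 + i) (l - 1 + j)), (Nat.ltb_spec i j); try lia;
  destruct (Nat.ltb_spec (l - 1 + j) (l - 1 + i)), (Nat.ltb_spec j i); try lia; reflexivity.
Qed.

Lemma Rabs_pair_force_le m Z i j eta : 0 < m -> 0 < eta -> eta <= Rabs (Z j - Z i) ->
  Rabs (pair_force m Z i j) <= Rpower eta (- m).
Proof.
  intros Hm Heta Hij. pose proof (Rpower_pos eta (- m)).
  assert (Rpower (Rabs (Z j - Z i)) (- m) <= Rpower eta (- m))
    by (apply Rpower_le_neg_exponent; lra).
  assert (0 < Rpower (Rabs (Z j - Z i)) (- m)) by apply Rpower_pos.
  unfold pair_force. destruct (Nat.ltb i j); [|destruct (Nat.ltb j i)];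
    rewrite ?Rabs_Ropp, ?Rabs_R0, ?Rabs_right by lra; lra.
Qed.

Lemma neighbour_force_cluster_diff m N l r Z eta i : 0 < m -> 0 < eta ->
  (1 <= l)%nat -> (l <= r)%nat -> (r <= N)%nat -> isolated_cluster eta N l r Z ->
  (1 <= i <= S (r - l))%nat ->
  Rabs (neighbour_force m N Z (l - 1 + i) - neighbour_force m (S (r - l)) (cluster l Z) i)
  <= 2 * Rpower eta (- m).
Proof.
  intros Hm Heta Hl Hlr HrN [Hleft Hright] Hi. unfold neighbour_force, cluster.
  set (n := (l - 1 + i)%nat). set (Re := Rpower eta (- m)).
  assert (HRe : 0 < Re) by apply Rpower_pos.
  assert (Hgap : forall a, eta <= a -> Rabs (Rpower a (- m)) <= Re).
  { intros a Ha. rewrite Rabs_right by (left; apply Rpower_pos).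
    apply Rpower_le_neg_exponent; lra. }
  assert (HR : Rabs ((if Nat.eq_dec n N then 0 else - Rpower (Z (S n) - Z n) (- m))
              - (if Nat.eq_dec i (S (r - l)) then 0
                 else - Rpower (Z (l - 1 + S i)%nat - Z n) (- m))) <= Re).
  { destruct (Nat.eq_dec i (S (r - l))), (Nat.eq_dec n N); unfold n in *; try lia.
    - rewrite Rminus_0_r, Rabs_R0; lra.
    - rewrite Rminus_0_r, Rabs_Ropp. apply Hgap.
      replace (l - 1 + i)%nat with r by lia. apply Hright; lia.
    - replace (l - 1 + S i)%nat with (S (l - 1 + i)) by lia.
      rewrite Rminus_diag, Rabs_R0; lra. }
  assert (HL : Rabs ((if Nat.eq_dec n 1 then 0 else Rpower (Z n - Z (pred n)) (- m))
              - (if Nat.eq_dec i 1 then 0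
                 else Rpower (Z n - Z (l - 1 + pred i)%nat) (- m))) <= Re).
  { destruct (Nat.eq_dec i 1), (Nat.eq_dec n 1); unfold n in *; try lia.
    - rewrite Rminus_0_r, Rabs_R0; lra.
    - rewrite Rminus_0_r. apply Hgap.
      replace (l - 1 + i)%nat with l by lia. replace (pred l) with (l - 1)%nat by lia.
      apply Hleft; lia.
    - replace (l - 1 + pred i)%nat with (pred (l - 1 + i)) by lia.
      rewrite Rminus_diag, Rabs_R0; lra. }
  match goal with |- Rabs (?a + ?b - (?c + ?d)) <= _ =>
    replace (a + b - (c + d)) with ((a - c) + (b - d)) by ring end.
  eapply Rle_trans; [apply Rabs_triang|]. lra.
Qed.

Lemma interaction_cluster_diff m N l r Z eta i : 0 < m -> 0 < eta -> increasing N Z ->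
  (1 <= l)%nat -> (l <= r)%nat -> (r <= N)%nat -> isolated_cluster eta N l r Z ->
  (1 <= i <= S (r - l))%nat ->
  Rabs (sum1 N (pair_force m Z (l - 1 + i)) - sum1 (S (r - l)) (pair_force m (cluster l Z) i))
  <= INR N * Rpower eta (- m).
Proof.
  intros Hm Heta HZ Hl Hlr HrN [Hleft Hright] Hi. set (n := (l - 1 + i)%nat).
  replace N with (l - 1 + (S (r - l) + (N - r)))%nat at 1 by lia.
  rewrite sum1_split, sum1_split.
  rewrite (sum1_ext (S (r - l)) (fun j => pair_force m Z n (l - 1 + j))
             (pair_force m (cluster l Z) i)) by (intros; apply pair_force_cluster).
  assert (Hbelow : Rabs (sum1 (l - 1) (pair_force m Z n)) <= INR (l - 1) * Rpower eta (- m)).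
  { apply Rabs_sum1_le; intros j Hj. apply Rabs_pair_force_le; auto.
    assert (Z j <= Z (l - 1)%nat) by (apply (increasing_le N); auto; lia).
    assert (Z l <= Z n) by (apply (increasing_le N); auto; unfold n; lia).
    specialize (Hleft ltac:(lia)). rewrite Rabs_left1; lra. }
  assert (Habove : Rabs (sum1 (N - r) (fun j => pair_force m Z n (l - 1 + (S (r - l) + j))))
                   <= INR (N - r) * Rpower eta (- m)).
  { apply Rabs_sum1_le; intros j Hj. apply Rabs_pair_force_le; auto.
    replace (l - 1 + (S (r - l) + j))%nat with (r + j)%nat by lia.
    assert (Z (S r) <= Z (r + j)%nat) by (apply (increasing_le N); auto; lia).
    assert (Z n <= Z r) by (apply (increasing_le N); auto; unfold n; lia).
    specialize (Hright ltac:(lia)). rewrite Rabs_right; lra. }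
  assert (INR (l - 1) + INR (N - r) <= INR N) by (rewrite <- plus_INR; apply le_INR; lia).
  pose proof (Rpower_pos eta (- m)).
  match goal with |- Rabs (?a + (?b + ?c) - ?b) <= _ =>
    replace (a + (b + c) - b) with (a + c) by ring end.
  eapply Rle_trans; [apply Rabs_triang|]. nra.
Qed.

Lemma flow_rhs_cluster_diff m chi N l r Z eta i : 0 < m -> 0 < chi -> 0 < eta ->
  increasing N Z -> (1 <= l)%nat -> (l <= r)%nat -> (r <= N)%nat ->
  isolated_cluster eta N l r Z -> (1 <= i <= S (r - l))%nat ->
  Rabs (flow_rhs m chi N Z (l - 1 + i) - flow_rhs m chi (S (r - l)) (cluster l Z) i)
  <= 2 * Rpower eta (- m) + 2 * chi * (INR N * Rpower eta (- m)).
Proof.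
  intros Hm Hchi Heta HZ Hl Hlr HrN Hiso Hi. rewrite !flow_rhs_split.
  pose proof (neighbour_force_cluster_diff m N l r Z eta i Hm Heta Hl Hlr HrN Hiso Hi).
  pose proof (interaction_cluster_diff m N l r Z eta i Hm Heta HZ Hl Hlr HrN Hiso Hi).
  match goal with |- Rabs (?a + 2 * chi * ?b - (?c + 2 * chi * ?d)) <= _ =>
    replace (a + 2 * chi * b - (c + 2 * chi * d)) with ((a - c) + (2 * chi) * (b - d)) by ring end.
  eapply Rle_trans; [apply Rabs_triang|]. rewrite Rabs_mult, (Rabs_right (2 * chi)) by lra.
  nra.
Qed.

Lemma cluster_energy_ge_first_gap m chi k c q Z : 1 < m -> 0 < chi ->
  C_inv m k = Finite c -> 0 < c -> chi * c < 1 -> (1 <= q)%nat -> (S q <= k)%nat ->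
  increasing (S q) Z ->
  (1 - chi * c) * Rpower (Z 2%nat - Z 1%nat) (1 - m) <= cluster_energy m chi q Z.
Proof.
  intros Hm Hchi Hc Hc0 Hcc Hq Hqk HZ. rewrite cluster_energy_eq by auto.
  pose proof (C_num_le_C_inv_of_le m k (S q) c Z Hm Hc Hc0 ltac:(lia) Hqk HZ).
  assert (Rpower (Z 2%nat - Z 1%nat) (1 - m) <= C_den m (S q) Z).
  { unfold C_den. replace (S q - 1)%nat with (S (q - 1)) by lia. rewrite sum1_first.
    assert (0 <= sum1 (q - 1) (fun i => Rpower (Z (S (S i)) - Z (S i)) (1 - m)))
      by (apply sum1_nonneg; intros; left; apply Rpower_pos).
    lra. }
  nra.
Qed.

Lemma cluster_energy_bounded_above m chi N T X l r eta t0 t1 : 1 < m -> 0 < chi -> 0 < eta ->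
  is_solution m chi N T X -> (1 <= l)%nat -> (l <= r)%nat -> (r <= N)%nat ->
  0 <= t0 -> t0 < t1 < T -> (forall t, t0 < t < T -> isolated_cluster eta N l r (X t)) ->
  exists M, forall t, t1 <= t < T -> cluster_energy m chi (r - l) (cluster l (X t)) <= M.
Proof.
  intros Hm Hchi Heta [Hin [_ Hder]] Hl Hlr HrN Ht0 Ht1 Hiso.
  set (E := fun t => cluster_energy m chi (r - l) (cluster l (X t))).
  set (B := 2 * Rpower eta (- m) + 2 * chi * (INR N * Rpower eta (- m))).
  set (K := (m - 1) * INR (S (r - l)) * (B * B) / 4).
  assert (HK : 0 <= K).
  { pose proof (pos_INR (S (r - l))). pose proof (Rle_0_sqr B). unfold K, Rsqr in *.
    apply Rmult_le_pos; [apply Rmult_le_pos|]; nra. }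
  exists (E t1 + K * (T - t1)). intros t Ht.
  assert (E t - E t1 <= K * (t - t1)).
  { apply increment_le_of_derive_le; [lra|]. intros s Hs.
    apply (cluster_energy_derive_le m chi (r - l) (fun s => cluster l (X s))
             (fun i => flow_rhs m chi N (X s) (l - 1 + i)) s B Hm).
    - intros i Hi. apply Hder; [lia | lra].
    - apply (cluster_increasing N); auto. exact (proj1 (Hin s ltac:(lra))).
    - intros i Hi. apply flow_rhs_cluster_diff; auto; [lra | exact (proj1 (Hin s ltac:(lra))) |].
      apply Hiso; lra. }
  fold (E t). nra.
Qed.

Lemma C_inv_of_lt_C_const m k chi : 0 < chi -> chi < C_const m k ->
  exists c, C_inv m k = Finite c /\ 0 < c /\ chi * c < 1.
Proof.
  unfold C_const. intros Hchi Hck. destruct (C_inv m k) as [c| |]; simpl in Hck;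
    [|rewrite Rinv_0 in Hck; lra..].
  exists c. destruct (Rtotal_order c 0) as [Hneg|[->|Hpos]].
  - pose proof (Rinv_lt_0_compat c Hneg); lra.
  - rewrite Rinv_0 in Hck; lra.
  - repeat split; auto. apply (Rmult_lt_compat_r c) in Hck; auto.
    rewrite Rinv_l in Hck; lra.
Qed.

Lemma weakly_blows_up_extend_left N X T l r : weakly_blows_up N X T l r -> (1 < l)%nat ->
  liminf_left_eq0 (fun t => X t l - X t (l - 1)%nat) T -> weakly_blows_up N X T (l - 1) r.
Proof.
  intros (Hl & Hlr & HrN & Hgaps) Hl1 Hnew.
  refine (conj _ (conj _ (conj _ _))); try lia.
  intros i Hi1 Hi2. destruct (Nat.eq_dec i (l - 1)) as [->|Hne]; [|apply Hgaps; lia].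
  replace (S (l - 1)) with l by lia. exact Hnew.
Qed.

Lemma weakly_blows_up_extend_right N X T l r : weakly_blows_up N X T l r -> (r < N)%nat ->
  liminf_left_eq0 (fun t => X t (S r) - X t r) T -> weakly_blows_up N X T l (S r).
Proof.
  intros (Hl & Hlr & HrN & Hgaps) HrN' Hnew.
  refine (conj _ (conj _ (conj _ _))); try lia.
  intros i Hi1 Hi2. destruct (Nat.eq_dec i r) as [->|Hne]; [exact Hnew | apply Hgaps; lia].
Qed.

Lemma eventually_bounded_below_of_not_liminf (P : Prop) (g : R -> R) T :
  (P -> (forall t, 0 <= t < T -> 0 < g t) /\ ~ liminf_left_eq0 g T) ->
  exists e d, 0 < e /\ 0 < d /\ forall t, 0 <= t < T -> T - d < t -> P -> e <= g t.
Proof.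
  intros Hg. destruct (classic P) as [HP|HnP]; [|exists 1, 1; repeat split; try lra; tauto].
  destruct (Hg HP) as [Hpos Hnot]. apply NNPP; intros Hnone. apply Hnot. split.
  - intros eps delta Heps Hdelta. apply NNPP; intros Hfar. apply Hnone.
    exists eps, delta; repeat split; auto. intros t Ht Htd _.
    apply Rnot_lt_le; intros Hlt. apply Hfar. exists t; auto.
  - intros eps Heps. exists 1; split; [lra|]. intros t Ht _. specialize (Hpos t Ht); lra.
Qed.

Lemma weak_blowup_set_isolated m chi N T X l r : 0 < T ->
  is_solution m chi N T X -> weak_blowup_set N X T l r ->
  exists eta t0, 0 < eta /\ 0 <= t0 < T /\
    forall t, t0 < t < T -> isolated_cluster eta N l r (X t).
Proof.
  intros HT [Hin _] [Hblow Hmax]. pose proof Hblow as (Hl & Hlr & HrN & _).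
  assert (Hgap_pos : forall i t, (1 <= i < N)%nat -> 0 <= t < T -> 0 < X t (S i) - X t i).
  { intros i t Hi Ht. pose proof (proj1 (Hin t Ht) i ltac:(lia) ltac:(lia)). lra. }
  destruct (eventually_bounded_below_of_not_liminf (1 < l)%nat
              (fun t => X t l - X t (l - 1)%nat) T) as (e1 & d1 & He1 & Hd1 & Hleft).
  { intros Hl1. split.
    - intros t Ht. replace l with (S (l - 1)) at 1 by lia. apply Hgap_pos; auto; lia.
    - intros Hlim. pose proof (Hmax _ _ (weakly_blows_up_extend_left N X T l r Hblow Hl1 Hlim)).
      lia. }
  destruct (eventually_bounded_below_of_not_liminf (r < N)%nat
              (fun t => X t (S r) - X t r) T) as (e2 & d2 & He2 & Hd2 & Hright).
  { intros HrN'. split.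
    - intros t Ht. apply Hgap_pos; auto; lia.
    - intros Hlim. pose proof (Hmax _ _ (weakly_blows_up_extend_right N X T l r Hblow HrN' Hlim)).
      lia. }
  exists (Rmin e1 e2), (Rmax 0 (Rmax (T - d1) (T - d2))).
  pose proof (Rmin_l e1 e2). pose proof (Rmin_r e1 e2).
  pose proof (Rmax_l 0 (Rmax (T - d1) (T - d2))). pose proof (Rmax_r 0 (Rmax (T - d1) (T - d2))).
  pose proof (Rmax_l (T - d1) (T - d2)). pose proof (Rmax_r (T - d1) (T - d2)).
  split; [apply Rmin_pos; auto|].
  split; [split; [lra | apply Rmax_lub_lt; [lra | apply Rmax_lub_lt; lra]]|].
  intros t Ht. split.
  - intros Hl1. apply Rle_trans with e1; auto. apply Hleft; auto; lra.
  - intros HrN'. apply Rle_trans with e2; auto. apply Hright; auto; lra.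
Qed.

Theorem proposition5p3 (m chi : R) (N k : nat) (T : R) (X : R -> nat -> R) (l r : nat) :
  1 < m -> (2 <= N)%nat -> 0 < chi -> (2 <= k)%nat -> chi < C_const m k ->
  0 < T -> is_solution m chi N T X ->
  weak_blowup_set N X T l r -> (l < r)%nat ->
  (k + 1 <= r - l + 1)%nat.
Proof.
  intros Hm HN Hchi Hk Hck HT Hsol Hwb Hlr.
  destruct (Compare_dec.le_lt_dec (k + 1) (r - l + 1)) as [Hge|Hsmall]; [exact Hge|exfalso].
  destruct (C_inv_of_lt_C_const m k chi Hchi Hck) as (c & Hc & Hc0 & Hcc).
  destruct (weak_blowup_set_isolated m chi N T X l r HT Hsol Hwb)
    as (eta & t0 & Heta & Ht0 & Hiso).
  destruct Hwb as [(Hl & _ & HrN & Hgaps) _].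
  set (t1 := (t0 + T) / 2).
  destruct (cluster_energy_bounded_above m chi N T X l r eta t0 t1 Hm Hchi Heta Hsol Hl
              ltac:(lia) HrN ltac:(lra) ltac:(unfold t1; lra) Hiso) as [M Hupper].
  destruct (Rpower_neg_exponent_large (1 - m) (M / (1 - chi * c)) ltac:(lra))
    as (eps & Heps & Hlarge).
  destruct (proj1 (Hgaps l ltac:(lia) Hlr) eps (T - t1) Heps ltac:(unfold t1; lra))
    as (t & Ht & Htt1 & Hgap_small).
  pose proof (proj1 (proj1 Hsol t Ht)) as Hincr.
  pose proof (Hincr l ltac:(lia) ltac:(lia)).
  pose proof (Hlarge (X t (S l) - X t l) ltac:(lra)).
  pose proof (cluster_energy_ge_first_gap m chi k c (r - l) (cluster l (X t)) Hm Hchi Hc Hc0 Hcc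
                ltac:(lia) ltac:(lia) (cluster_increasing N l r (X t) Hincr Hl HrN)) as Hlower.
  rewrite cluster_first_gap in Hlower by lia.
  pose proof (Hupper t ltac:(unfold t1 in *; lra)).
  assert (M < (1 - chi * c) * Rpower (X t (S l) - X t l) (1 - m)).
  { replace M with ((1 - chi * c) * (M / (1 - chi * c))) at 1 by (field; lra).
    apply Rmult_lt_compat_l; lra. }
  lra.
Qed.
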